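(* Let $\alpha>0$ be an ordinal, let $X$ be a topological space, let $Y$ be a $U(\alpha)$-space, let $S$ be a dense subset of $X$ and let $f:S\to Y$ be continuous. Then the following are equivalent: (1) $f$ has a continuous extension to $X$ (a continuous $F:X\to Y$ with $F|_S=f$); (2) both of the following hold: $( * )$ for every family $\{A_\beta\}$ of closed subsets of $Y$ with $\bigcap_\beta A_\beta=\emptyset$ one has $\bigcap_\beta\overline{f^{-1}(A_\beta)}=\emptyset$ (closures in $X$); and $( *_\alpha)$ for every open set $V$ of $Y$ the set $X_{\theta^\alpha}(f^{-1}(V))$ is open in $X$.
   Context: $\mathcal N(x)$ denotes the set of all open neighborhoods of $x$ in $X$. For a subset $A$ of a space $Z$ and an ordinal $\alpha>0$, an $\alpha$-hull of $A$ is an open set $U\supseteq A$ for which there exists a family $\{U_\beta\}_{\beta\le\alpha}$ of open sets containing $A$ with $\mathrm{cl}\,U_\beta\subseteq U_{\beta+1}$ whenever $\beta+1\le\alpha$, and $U=U_\alpha=\bigcup_{\beta\le\alpha}U_\beta$. For $M\subseteq Z$, $\mathrm{cl}_{\theta^\alpha}M$ is the set of $z\in Z$ such that every $\alpha$-hull $U$ of $z$ satisfies $\mathrm{cl}\,U\cap M\neq\emptyset$. $Z$ is a $U(\alpha)$-space if any two distinct points have $\alpha$-hulls with disjoint closures. For $V\subseteq Y$, a point $x\in X$ is an $X_{\theta^\alpha}$-interior point of $f^{-1}(V)$ if $\bigcap\{\mathrm{cl}_{\theta^\alpha} f(P\cap S):P\in\mathcal N(x)\}\subseteq V$; $X_{\theta^\alpha}(f^{-1}(V))$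 denotes the set of all such points. *)

From HB Require Import structures.
From mathcomp Require Import all_boot all_order.
From mathcomp Require Import all_classical topology.
Set Implicit Arguments. Unset Strict Implicit. Unset Printing Implicit Defensive.
Local Open Scope classical_set_scope.

(* An ordinal alpha is represented by the closed initial segment [0, alpha]:
   a well-ordered set (strict, total, well-founded order) with a greatest
   element os_top (= alpha).  Every ordinal alpha gives such a segment and
   every such segment is order-isomorphic to [0, alpha] for a unique alpha. *)
Record ord_seg := OrdSeg {
  os_T : Type;
  os_lt : os_T -> os_T -> Prop;
  os_top : os_T;
  os_irrefl : forall b, ~ os_lt b b;
  os_trans : forall b c d, os_lt b c -> os_lt c d -> os_lt b d;
  os_total : forall b c, os_lt b c \/ b = c \/ os_lt c b;
  os_wf : well_founded os_lt;
  os_top_max : forall b, b = os_top \/ os_lt b os_top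
}.

Definition os_pos (a : ord_seg) : Prop := exists b, os_lt b (os_top a).

Definition os_succ (a : ord_seg) (b c : os_T a) : Prop :=
  os_lt b c /\ forall d, ~ (os_lt b d /\ os_lt d c).

Definition alpha_hull (a : ord_seg) (Z : topologicalType) (A U : set Z) : Prop :=
  exists Uf : os_T a -> set Z,
    (forall b, open (Uf b) /\ A `<=` Uf b) /\
    (forall b c, os_succ b c -> closure (Uf b) `<=` Uf c) /\
    U = Uf (os_top a) /\
    U = \bigcup_(b in [set: os_T a]) Uf b.

Definition cl_theta (a : ord_seg) (Z : topologicalType) (M : set Z) : set Z :=
  [set z | forall U, alpha_hull a [set z] U -> closure U `&` M !=set0].

Definition U_space (a : ord_seg) (Z : topologicalType) : Prop :=
  forall y z : Z, y <> z -> exists U V,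
    alpha_hull a [set y] U /\ alpha_hull a [set z] V /\
    closure U `&` closure V = set0.

(* X_{theta^alpha}(f^{-1}(V)) for f : S -> Y (f given on X, only used on S) *)
Definition X_theta (a : ord_seg) (X Y : topologicalType) (S : set X)
    (f : X -> Y) (V : set Y) : set X :=
  [set x | \bigcap_(P in [set P | open P /\ P x]) cl_theta a (f @` (P `&` S))
           `<=` V].

From mathcomp Require Import all_boot all_order.
From mathcomp Require Import all_classical topology.
Local Open Scope classical_set_scope.

(** For [x] in [X] let [theta_limits x] be the set of all [y] lying in
  [cl_theta (f (P `&` S))] for every open neighbourhood [P] of [x].  Closures
  of alpha-hulls separate points of a U(alpha)-space, so the star condition
  forces [theta_limits x] to have at most one point, and density of [S]
  together with the star condition forces it to have at least one.  Calling
  this point [F x], the set [X_theta V] is exactly [F^-1 V]; hence the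
  star_alpha condition says that [F] is continuous, and [F] extends [f] because
  [f x] is a theta-limit at every [x] in [S].  Conversely, a continuous
  extension [F] satisfies the star condition and has [F x] as unique
  theta-limit at [x], so [X_theta V = F^-1 V] is open. *)

Lemma closureP {T : topologicalType} (A : set T) (x : T) :
  closure A x <-> (forall O, open O -> O x -> A `&` O !=set0).
Proof.
split=> [clAx O oO Ox|clAx B]; first exact/clAx/open_nbhs_nbhs.
rewrite nbhsE => -[O [oO Ox] OB].
by have [y [Ay Oy]] := clAx O oO Ox; exists y; split; [|exact: OB].
Qed.

Lemma dense_closureI {T : topologicalType} {S P : set T} {x : T} :
  dense S -> open P -> P x -> closure (P `&` S) x.
Proof.
move=> dS oP Px; apply/closureP => O oO Ox.
have [y [[Oy Py] Sy]] : (O `&` P) `&` S !=set0.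
  by apply: dS; [exists x | exact: openI].
by exists y.
Qed.

Lemma continuous_closure_image {T U : topologicalType} {F : T -> U}
    {B : set T} {x : T} :
  continuous F -> closure B x -> closure (F @` B) (F x).
Proof.
move=> /continuousP Fc /closureP clBx; apply/closureP => O oO OFx.
have [y [By Oy]] := clBx _ (Fc O oO) OFx.
by exists (F y); split=> //; exists y.
Qed.

Section AlphaHulls.
Variable a : ord_seg.

Lemma alpha_hull_open {Z : topologicalType} {A U : set Z} :
  alpha_hull a A U -> open U.
Proof. by move=> [Uf [hUf [_ [-> _]]]]; exact: (hUf _).1. Qed.

Lemma alpha_hull_sub {Z : topologicalType} {A U : set Z} :
  alpha_hull a A U -> A `<=` U.
Proof. by move=> [Uf [hUf [_ [-> _]]]]; exact: (hUf _).2. Qed.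

Lemma closure_sub_cl_theta (Z : topologicalType) (M : set Z) :
  closure M `<=` cl_theta a M.
Proof.
move=> z /closureP clMz U hU.
have [y [My Uy]] := clMz U (alpha_hull_open hU) (alpha_hull_sub hU _ erefl).
by exists y; split; [exact: subset_closure|].
Qed.

End AlphaHulls.

Section ThetaLimits.
Context (a : ord_seg) {X Y : topologicalType} (S : set X) (f : X -> Y).

Definition star_condition : Prop :=
  forall Fam : set (set Y), (forall A, Fam A -> closed A) ->
    \bigcap_(A in Fam) A = set0 ->
    \bigcap_(A in Fam) closure (S `&` f @^-1` A) = set0.

Definition theta_limits (x : X) : set Y :=
  \bigcap_(P in [set P | open P /\ P x]) cl_theta a (f @` (P `&` S)).

Lemma X_thetaE (V : set Y) :
  X_theta a S f V = [set x | theta_limits x `<=` V].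
Proof. by []. Qed.

Lemma X_theta_preimage (F : X -> Y) (V : set Y) :
  (forall x, theta_limits x = [set F x]) -> X_theta a S f V = F @^-1` V.
Proof.
move=> limF; rewrite X_thetaE; apply/seteqP; split=> x /=.
- by rewrite limF => /(_ (F x) erefl).
- by rewrite limF => VFx _ ->.
Qed.

Lemma theta_limits_closure_preimage (x : X) (y : Y) (U : set Y) :
  theta_limits x y -> alpha_hull a [set y] U ->
  closure (S `&` f @^-1` closure U) x.
Proof.
move=> limxy hU; apply/closureP => O oO Ox.
have [z [clUz [s [Os Ss] fsz]]] := limxy O (conj oO Ox) U hU.
by exists s; rewrite /preimage /= fsz.
Qed.

Lemma theta_limits_subsingleton (x : X) (y1 y2 : Y) :
  U_space a Y -> star_condition ->
  theta_limits x y1 -> theta_limits x y2 -> y1 = y2.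
Proof.
move=> UY star lim1 lim2; apply: contrapT => /UY [U1 [U2 [hU1 [hU2 disj]]]].
pose Fam := [set A | A = closure U1 \/ A = closure U2].
have Famcl A : Fam A -> closed A by move=> [->|->]; exact: closed_closure.
have Fam0 : \bigcap_(A in Fam) A = set0.
  apply/seteqP; split=> // z Famz.
  by rewrite -disj; split; apply: Famz; [left|right].
have := star Fam Famcl Fam0; apply/eqP/set0P; exists x => A [->|->].
- exact: theta_limits_closure_preimage lim1 hU1.
- exact: theta_limits_closure_preimage lim2 hU2.
Qed.

Lemma theta_limits_set1 (x : X) (y : Y) :
  U_space a Y -> star_condition -> theta_limits x y -> theta_limits x = [set y].
Proof.
move=> UY star limy; apply/seteqP; split=> [z limz|_ ->] //.
exact: theta_limits_subsingleton UY star limz limy.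
Qed.

Lemma theta_limits_nonempty (x : X) :
  dense S -> star_condition -> theta_limits x !=set0.
Proof.
move=> dS star; apply: contrapT => nolim.
pose Fam := [set closure (f @` (P `&` S)) | P in [set P | open P /\ P x]].
have Famcl A : Fam A -> closed A by move=> [P _ <-]; exact: closed_closure.
have Fam0 : \bigcap_(A in Fam) A = set0.
  apply/seteqP; split=> // y Famy; apply: nolim; exists y => P Px.
  by apply: closure_sub_cl_theta; apply: Famy; exists P.
have := star Fam Famcl Fam0; apply/eqP/set0P; exists x => _ [P [oP Px] <-].
have := dense_closureI dS oP Px; apply: closureS => s [Ps Ss].
by split=> //; apply: subset_closure; exists s.
Qed.

Lemma theta_limits_self (x : X) : S x -> theta_limits x (f x).
Proof.
by move=> Sx P [_ Px]; apply/closure_sub_cl_theta/subset_closure; exists x.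
Qed.

Section Extension.
Context {F : X -> Y} (Fc : continuous F) (FS : forall x, S x -> F x = f x).

Lemma extension_closure_preimage (A : set Y) :
  closed A -> closure (S `&` f @^-1` A) `<=` F @^-1` A.
Proof.
move=> clA x /(continuous_closure_image Fc) clFx.
rewrite /preimage /= (closure_id A).1 //.
by apply: closureS clFx => _ [s [Ss Afs] <-]; rewrite FS.
Qed.

Lemma extension_star_condition : star_condition.
Proof.
move=> Fam Famcl Fam0; apply/seteqP; split=> // x Famx.
suff : (\bigcap_(A in Fam) A) (F x) by rewrite Fam0.
move=> A FamA.
exact: extension_closure_preimage (Famcl A FamA) _ (Famx A FamA).
Qed.

Lemma extension_theta_limit (x : X) :
  dense S -> theta_limits x (F x).
Proof.
move=> dS P [oP Px]; apply: closure_sub_cl_theta.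
have := continuous_closure_image Fc (dense_closureI dS oP Px).
by apply: closureS => _ [s [Ps Ss] <-]; exists s; rewrite ?FS.
Qed.

End Extension.
End ThetaLimits.

Theorem theorem3p3 (a : ord_seg) (X Y : topologicalType) (S : set X)
    (f : X -> Y) :
  os_pos a -> U_space a Y -> dense S -> {within S, continuous f} ->
  ((exists F : X -> Y, continuous F /\ (forall x, S x -> F x = f x)) <->
   ((forall Fam : set (set Y), (forall A, Fam A -> closed A) ->
       \bigcap_(A in Fam) A = set0 ->
       \bigcap_(A in Fam) closure (S `&` f @^-1` A) = set0) /\
    (forall V : set Y, open V -> open (X_theta a S f V)))).
Proof.
move=> _ UY dS _; split.
- move=> [F [Fc FS]].
  have star := extension_star_condition S f Fc FS.
  have limF x : theta_limits a S f x = [set F x].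
    exact: theta_limits_set1 UY star (extension_theta_limit a S f Fc FS x dS).
  split=> // V oV; rewrite (X_theta_preimage a S f F V limF).
  exact: (continuousP F).1 Fc V oV.
- move=> [star openX].
  have [F limFx] := choice (fun x => theta_limits_nonempty a S f x dS star).
  have limF x : theta_limits a S f x = [set F x].
    exact: theta_limits_set1 UY star (limFx x).
  exists F; split.
  + apply/continuousP => V oV.
    by rewrite -(X_theta_preimage a S f F V limF); exact: openX.
  + by move=> x Sx; have := theta_limits_self a S f x Sx; rewrite limF => ->.
Qed.
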